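(* For every even integer $n\geq 4$ and every integer $m\geq 2$, the graph $mW_n$ (the disjoint union of $m$ copies of the wheel $W_n$) is $C_3$-supermagic.
   Context: All graphs are finite and simple. For a graph $H$, a graph $G=(V,E)$ has an $H$-covering if every edge of $G$ belongs to a subgraph of $G$ isomorphic to $H$. For such $G$, an $H$-magic labeling is a bijection $\lambda: V\cup E\to\{1,2,\dots,|V|+|E|\}$ for which there is a constant $c$ such that for every subgraph $H'=(V',E')$ of $G$ isomorphic to $H$, $\sum_{v\in V'}\lambda(v)+\sum_{e\in E'}\lambda(e)=c$. It is $H$-supermagic if moreover $\{\lambda(v):v\in V\}=\{1,\dots,|V|\}$; $G$ is $H$-supermagic if it admits such a labeling. $C_k$ is the cycle of length $k$. $mG$ denotes the disjoint union of $m$ copies of $G$. The wheel $W_n=K_1+C_n$ has vertices $c,v_1,\dots,v_n$ and edges $cv_i$ ($1\le i\le n$) and $v_iv_{i+1}$ ($1\le i\le n$, indices modulo $n$). *)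

From mathcomp Require Import all_boot.
Set Implicit Arguments. Unset Strict Implicit. Unset Printing Implicit Defensive.

Record sgraph := SGraph {
  vert : finType;
  adj : rel vert;
  adj_sym : symmetric adj;
  adj_irr : irreflexive adj }.

Definition symrel (T : finType) (r : rel T) : rel T :=
  fun x y => (x != y) && (r x y || r y x).

Lemma symrel_sym (T : finType) (r : rel T) : symmetric (symrel r).
Proof. by move=> x y; rewrite /symrel eq_sym orbC. Qed.

Lemma symrel_irr (T : finType) (r : rel T) : irreflexive (symrel r).
Proof. by move=> x; rewrite /symrel eqxx. Qed.

Definition mkSG (T : finType) (r : rel T) : sgraph :=
  SGraph (@symrel_sym T r) (@symrel_irr T r).

Definition edges (G : sgraph) : {set {set vert G}} :=
  [set A : {set vert G} | [exists x, exists y, adj x y && (A == [set x; y])]].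

Definition cycle_graph (k : nat) : sgraph :=
  @mkSG 'I_k (fun i j : 'I_k => j == (i.+1 %% k) :> nat).

(* Wheel W_n = K_1 + C_n: vertices None (= centre c) and Some i (= v_{i+1}). *)
Definition wheel_rel (n : nat) : rel (option 'I_n) :=
  fun x y => match x, y with
             | None, Some _ => true
             | Some i, Some j => (j == (i.+1 %% n) :> nat)
             | _, _ => false
             end.
Definition wheel (n : nat) : sgraph := @mkSG (option 'I_n) (@wheel_rel n).

Definition copies_rel (m : nat) (G : sgraph) : rel ('I_m * vert G) :=
  fun x y => (x.1 == y.1) && adj x.2 y.2.
Definition copies (m : nat) (G : sgraph) : sgraph :=
  @mkSG ('I_m * vert G)%type (@copies_rel m G).

(* Embeddings of H into G: injective homomorphisms. The subgraphs of G
   isomorphic to H are exactly the images (f(V_H), f(E_H)) of embeddings. *)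
Definition embedding (H G : sgraph) (f : vert H -> vert G) : Prop :=
  injective f /\ (forall u v, adj u v -> adj (f u) (f v)).

Definition H_covering (H G : sgraph) : Prop :=
  forall x y : vert G, adj x y ->
    exists f : vert H -> vert G, embedding f /\
      exists u v : vert H, [/\ adj u v, f u = x & f v = y].

Definition weight (H G : sgraph) (lv : vert G -> nat) (le : {set vert G} -> nat)
  (f : vert H -> vert G) : nat :=
  \sum_(u : vert H) lv (f u) + \sum_(e in edges H) le (f @: e).

Definition total_labeling (G : sgraph) (lv : vert G -> nat) (le : {set vert G} -> nat) :=
  perm_eq ([seq lv x | x <- enum (vert G)] ++ [seq le e | e <- enum (edges G)])
          (iota 1 (#|vert G| + #|edges G|)).

Definition H_magic_labeling (H G : sgraph) lv le : Prop :=
  @total_labeling G lv le /\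
  exists c, forall f : vert H -> vert G, embedding f -> weight lv le f = c.

Definition H_supermagic_labeling (H G : sgraph) lv le : Prop :=
  @H_magic_labeling H G lv le /\
  perm_eq [seq lv x | x <- enum (vert G)] (iota 1 #|vert G|).

Definition H_supermagic (H G : sgraph) : Prop :=
  H_covering H G /\ exists lv le, @H_supermagic_labeling H G lv le.

(* A C_3-supermagic labelling lambda of any graph G lifts to mG: copy k of a vertex x gets
   m (lambda x - 1) + k + 1 and copy k of an edge e gets m (lambda e - 1) + m - k.  These are
   again bijections onto {1, ..., m |V|} and onto the next m |E| labels, and since a triangle
   lies inside one copy and has as many vertices as edges, the shifts k + 1 and m - k add up
   to 3 (m + 1) whatever k is.  So it suffices to label W_n itself; for n >= 4 its only
   triangles are c v_i v_(i+1), and the paper's labelling gives all of them the same weight. *)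

From mathcomp Require Import all_boot zify.
Set Implicit Arguments. Unset Strict Implicit. Unset Printing Implicit Defensive.

Lemma mulnD_ltn (m a b p : nat) : a < p -> b < m -> m * a + b < m * p.
Proof.
move=> lt_ap lt_bm; apply: (@leq_trans (m * a.+1)).
  by rewrite mulnS [m + _]addnC ltn_add2l.
by rewrite leq_mul2l lt_ap orbT.
Qed.

Lemma mulnD_ltn_inj (m a b a' b' : nat) :
  b < m -> b' < m -> m * a + b = m * a' + b' -> a = a' /\ b = b'.
Proof.
move=> lt_bm lt_b'm eq_ab; have m_gt0 : 0 < m by apply: leq_ltn_trans lt_bm.
have := congr1 (modn^~ m) eq_ab; have := congr1 (divn^~ m) eq_ab.
by rewrite /= ![m * _]mulnC !divnMDl // !modnMDl !divn_small // !modn_small // !addn0.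
Qed.

Lemma uniq_perm_iota1 (s : seq nat) :
  uniq s -> {in s, forall x, 0 < x <= size s} -> perm_eq s (iota 1 (size s)).
Proof.
move=> s_uniq s_range.
have s_sub : {subset s <= iota 1 (size s)}.
  by move=> x /s_range; rewrite mem_iota add1n.
have [_ s_perm] := uniq_min_size s_uniq s_sub (eq_leq (size_iota _ _)).
by apply: uniq_perm; rewrite ?iota_uniq.
Qed.

Lemma adj_edges (G : sgraph) (x y : vert G) : adj x y -> [set x; y] \in edges G.
Proof. by move=> a_xy; rewrite inE; apply/existsP; exists x; apply/existsP; exists y; rewrite a_xy eqxx. Qed.

Lemma edge_neq0 (G : sgraph) (A : {set vert G}) : A \in edges G -> A != set0.
Proof.
rewrite inE => /existsP[x /existsP[y /andP[_ /eqP ->]]].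
by apply/set0Pn; exists x; rewrite !inE eqxx.
Qed.

Lemma supermagic_labelingP (H G : sgraph) (lv : vert G -> nat) (le : {set vert G} -> nat) :
  @H_supermagic_labeling H G lv le <->
  [/\ injective lv, forall x, 0 < lv x <= #|vert G|,
      {in edges G &, injective le},
      {in edges G, forall A, #|vert G| < le A <= #|vert G| + #|edges G|}
    & exists c, forall f : vert H -> vert G, embedding f -> weight lv le f = c].
Proof.
set vs := [seq lv x | x <- enum (vert G)]; set es := [seq le A | A <- enum (edges G)].
have size_vs : size vs = #|vert G| by rewrite size_map -cardE.
have size_es : size es = #|edges G| by rewrite size_map -cardE.
split=> [[[tot magic] vperm] | [lv_inj lv_range le_inj le_range magic]].
  have vs_iota x : (x \in vs) = (0 < x <= #|vert G|).
    by rewrite (perm_mem vperm) mem_iota add1n.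
  have := perm_uniq tot; rewrite iota_uniq cat_uniq => /and3P[vs_uniq vs_es es_uniq].
  have lv_range x : 0 < lv x <= #|vert G| by rewrite -vs_iota map_f ?mem_enum.
  split=> //; first exact/injectiveP.
    exact/dinjectiveP.
  move=> A EA; have es_A : le A \in es by rewrite map_f ?mem_enum.
  have := perm_mem tot (le A); rewrite mem_cat es_A orbT mem_iota add1n => /esym range.
  have := hasPn vs_es _ es_A; rewrite vs_iota; lia.
split; last first.
  rewrite -size_vs; apply: uniq_perm_iota1.
    by rewrite map_inj_uniq ?enum_uniq.
  by move=> _ /mapP[x _ ->]; rewrite size_vs.
split=> //; rewrite /total_labeling -size_vs -size_es -size_cat.
apply: uniq_perm_iota1.
  rewrite cat_uniq map_inj_uniq ?enum_uniq //= map_inj_in_uniq ?enum_uniq ?andbT.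
    apply/hasPn => _ /mapP[A EA ->]; apply/mapP => -[x _ eq_le].
    by rewrite mem_enum in EA; have := le_range A EA; have := lv_range x; lia.
  by move=> A B; rewrite !mem_enum; exact: le_inj.
rewrite size_cat size_vs size_es => y; rewrite mem_cat => /orP[] /mapP[w Ew ->].
  by have := lv_range w; lia.
by rewrite mem_enum in Ew; have := le_range w Ew; lia.
Qed.

Notation C3 := (cycle_graph 3).
Definition i0 : 'I_3 := @Ordinal 3 0 isT.
Definition i1 : 'I_3 := @Ordinal 3 1 isT.
Definition i2 : 'I_3 := @Ordinal 3 2 isT.

Lemma ord3P (u : 'I_3) : [\/ u = i0, u = i1 | u = i2].
Proof.
by case: u => -[|[|[|//]]] ?; [constructor 1 | constructor 2 | constructor 3]; apply: val_inj.
Qed.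

Lemma adj_C3 (u v : 'I_3) : @adj C3 u v = (u != v).
Proof. by case: (ord3P u) => ->; case: (ord3P v) => ->. Qed.

Lemma edges_C3 : edges C3 = [set [set i0; i1]; [set i1; i2]; [set i0; i2]].
Proof.
apply/setP => A; rewrite !inE; apply/existsP/idP => [[x /existsP[y]] | ].
  rewrite adj_C3 => /andP[neq_xy /eqP ->].
  by case: (ord3P x) neq_xy => ->; case: (ord3P y) => ->;
     rewrite ?[[set i1; i0]]setUC ?[[set i2; i1]]setUC ?[[set i2; i0]]setUC !eqxx ?orbT.
by case/orP => [/orP[] | ] /eqP ->; [exists i0 | exists i1 | exists i0]; apply/existsP;
   [exists i1 | exists i2 | exists i2]; rewrite adj_C3 eqxx.
Qed.

Definition triangle_weight (G : sgraph) (lv : vert G -> nat) (le : {set vert G} -> nat)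
    (x y z : vert G) : nat :=
  lv x + lv y + lv z + le [set x; y] + le [set y; z] + le [set x; z].

Lemma triangle_weightC12 (G : sgraph) lv le (x y z : vert G) :
  triangle_weight lv le x y z = triangle_weight lv le y x z.
Proof. by rewrite /triangle_weight (setUC [set y] [set x]); lia. Qed.

Lemma triangle_weightC23 (G : sgraph) lv le (x y z : vert G) :
  triangle_weight lv le x y z = triangle_weight lv le x z y.
Proof. by rewrite /triangle_weight (setUC [set z] [set y]); lia. Qed.

Lemma weight_C3 (G : sgraph) lv le (f : 'I_3 -> vert G) :
  @weight C3 G lv le f = triangle_weight lv le (f i0) (f i1) (f i2).
Proof.
have sum_ord3 (F : 'I_3 -> nat) : \sum_u F u = F i0 + F i1 + F i2.
  rewrite (bigD1 i0) // (bigD1 i1) // (bigD1 i2) //= big1 ?addn0 ?addnA //.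
  by move=> u; case: (ord3P u) => ->.
have enum_edges : perm_eq (enum (edges C3)) [:: [set i0; i1]; [set i1; i2]; [set i0; i2]].
  apply: uniq_perm; [exact: enum_uniq | | by move=> A; rewrite mem_enum edges_C3 !inE orbA].
  by rewrite /= !inE !negb_or andbT -andbA; apply/and3P; split; apply/eqP => /setP;
    [move/(_ i0) | move/(_ i1) | move/(_ i1)]; rewrite !inE.
rewrite /weight sum_ord3 -big_enum (perm_big _ enum_edges) !big_cons big_nil /=.
by rewrite !imsetU1 !imset_set1 /triangle_weight; lia.
Qed.

Lemma embedding_C3 (G : sgraph) (f : 'I_3 -> vert G) :
  @embedding C3 G f <-> [/\ adj (f i0) (f i1), adj (f i1) (f i2) & adj (f i0) (f i2)].
Proof.
split=> [[_ f_adj] | [a01 a12 a02]]; first by split; apply: f_adj; rewrite adj_C3.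
have adj_f u v : u != v -> adj (f u) (f v).
  by case: (ord3P u) => ->; case: (ord3P v) => -> //= _; rewrite // adj_sym.
split=> [u v eq_f | u v]; last by rewrite adj_C3; apply: adj_f.
by apply: contraTeq isT => /adj_f; rewrite eq_f adj_irr.
Qed.

Lemma C3_covering (G : sgraph) :
  (forall x y : vert G, adj x y -> exists z, adj x z && adj y z) -> H_covering C3 G.
Proof.
move=> triangle x y a_xy; have [z /andP[a_xz a_yz]] := triangle x y a_xy.
exists (fun u => if u == i0 then x else if u == i1 then y else z); split.
  by apply/embedding_C3; split; rewrite //= adj_sym.
by exists i0, i1; rewrite adj_C3.
Qed.

Section Copies.
Variables (G : sgraph) (m : nat).

Lemma adj_copies (x y : 'I_m * vert G) :
  @adj (copies m G) x y = (x.1 == y.1) && adj x.2 y.2.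
Proof.
case: x y => [k a] [l b]; rewrite /= /symrel /copies_rel /= [l == k]eq_sym adj_sym orbb.
by apply/andb_idl => /andP[_]; apply: contraTneq => -[_ ->]; rewrite adj_irr.
Qed.

Lemma edges_copies :
  edges (copies m G) =
  [set pair kA.1 @: kA.2 | kA : 'I_m * {set vert G} in setX [set: 'I_m] (edges G)].
Proof.
apply/setP => B; rewrite inE; apply/existsP/imsetP.
  case=> -[k a] /existsP[[l b]]; rewrite adj_copies /= => /andP[/andP[/eqP <- a_ab] /eqP ->].
  by exists (k, [set a; b]); rewrite ?imsetU1 ?imset_set1 // in_setX in_setT adj_edges.
case=> -[k A]; rewrite !inE /= => /existsP[a /existsP[b /andP[a_ab /eqP ->]]] ->.
exists (k, a); apply/existsP; exists (k, b).
by rewrite [symrel _ _ _](adj_copies (k, a) (k, b)) imsetU1 imset_set1 /= !eqxx a_ab.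
Qed.

Lemma imset_snd_pair (k : 'I_m) (A : {set vert G}) : snd @: (pair k @: A) = A.
Proof. by rewrite -imset_comp imset_id. Qed.

Lemma card_edges_copies : #|edges (copies m G)| = m * #|edges G|.
Proof.
rewrite edges_copies card_in_imset ?cardsX ?cardsT ?card_ord // => -[k A] [l B].
rewrite !inE /= => /existsP[a /existsP[b /andP[_ /eqP eq_A]]] _ eq_kA.
have : (k, a) \in pair l @: B by rewrite -eq_kA imset_f // eq_A !inE eqxx.
case/imsetP=> _ _ [-> _]; congr (_, _).
by rewrite -(imset_snd_pair k A) eq_kA imset_snd_pair.
Qed.

Definition copy_index (B : {set 'I_m * vert G}) : nat :=
  if [pick x in B] is Some x then x.1 else 0.

Lemma copy_index_pair (k : 'I_m) (A : {set vert G}) :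
  A != set0 -> copy_index (pair k @: A) = k.
Proof.
case/set0Pn=> a Aa; rewrite /copy_index; case: pickP => [_ /imsetP[b _ ->] // |].
by move/(_ (k, a)); rewrite imset_f.
Qed.

Definition copies_lv (lv : vert G -> nat) (x : 'I_m * vert G) : nat :=
  m * (lv x.2).-1 + x.1.+1.

Definition copies_le (le : {set vert G} -> nat) (B : {set 'I_m * vert G}) : nat :=
  m * (le (snd @: B)).-1 + (m - copy_index B).

Lemma copies_le_pair le (k : 'I_m) (A : {set vert G}) :
  A != set0 -> copies_le le (pair k @: A) = m * (le A).-1 + (m - k).
Proof. by move=> nzA; rewrite /copies_le imset_snd_pair copy_index_pair. Qed.

Lemma triangle_weight_copies lv le (k : 'I_m) (x y z : vert G) :
  (forall v, 0 < lv v) -> {in edges G, forall A, 0 < le A} ->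
  adj x y -> adj y z -> adj x z ->
  @triangle_weight (copies m G) (copies_lv lv) (copies_le le) (k, x) (k, y) (k, z) + 3 * m =
  m * triangle_weight lv le x y z + 3.
Proof.
move=> lv_gt0 le_gt0 /adj_edges E_xy /adj_edges E_yz /adj_edges E_xz.
have pair_edge u v : [set (k, u); (k, v)] = pair k @: [set u; v].
  by rewrite imsetU1 imset_set1.
rewrite /triangle_weight !pair_edge !copies_le_pair ?edge_neq0 // /copies_lv /=.
rewrite -[lv x](prednK (lv_gt0 x)) -[lv y](prednK (lv_gt0 y)) -[lv z](prednK (lv_gt0 z)).
rewrite -[le [set x; y]](prednK (le_gt0 _ E_xy)) -[le [set y; z]](prednK (le_gt0 _ E_yz)).
rewrite -[le [set x; z]](prednK (le_gt0 _ E_xz)) /=.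
have := ltn_ord k; rewrite !addSn !addnS !mulnS !mulnDr; lia.
Qed.

Lemma card_copies : #|vert (copies m G)| = m * #|vert G|.
Proof. by rewrite card_prod card_ord. Qed.

Lemma copies_covering (H : sgraph) : H_covering H G -> H_covering H (copies m G).
Proof.
move=> cover [k a] [l b]; rewrite adj_copies /= => /andP[/eqP <- a_ab].
have [g [[g_inj g_adj] [u [v [a_uv gu gv]]]]] := cover a b a_ab.
exists (fun w => (k, g w)); split; last by exists u, v; rewrite gu gv.
by split=> [w w' [] /g_inj | w w' /g_adj]; rewrite // adj_copies eqxx.
Qed.

Lemma embedding_C3_copies (f : 'I_3 -> 'I_m * vert G) : @embedding C3 (copies m G) f ->
  exists k : 'I_m, exists g : 'I_3 -> vert G, @embedding C3 G g /\ forall u, f u = (k, g u).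
Proof.
case/embedding_C3; rewrite !adj_copies => /andP[/eqP e01 a01] /andP[/eqP e12 a12] /andP[_ a02].
exists (f i0).1, (fun u => (f u).2); split; first exact/embedding_C3.
move=> u; rewrite [LHS]surjective_pairing; congr (_, _).
by case: (ord3P u) => ->; rewrite // -?e12 -?e01.
Qed.

Section CopiesLabeling.
Variables (lv : vert G -> nat) (le : {set vert G} -> nat).
Hypothesis lv_inj : injective lv.
Hypothesis lv_range : forall x, 0 < lv x <= #|vert G|.
Hypothesis le_inj : {in edges G &, injective le}.
Hypothesis le_range : {in edges G, forall A, #|vert G| < le A <= #|vert G| + #|edges G|}.

Let lt_copy (k : 'I_m) : m - k.+1 < m.
Proof. by have := ltn_ord k; lia. Qed.

Let lv_gt0 x : 0 < lv x.
Proof. by case/andP: (lv_range x). Qed.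

Let le_gt0 A : A \in edges G -> 0 < le A.
Proof. by move/le_range; lia. Qed.

Lemma copies_lv_inj : injective (copies_lv lv).
Proof.
move=> [k a] [l b]; rewrite /copies_lv /= !addnS => /succn_inj.
case/(mulnD_ltn_inj (ltn_ord k) (ltn_ord l)) => eq_lv /val_inj ->.
by congr (_, _); apply: lv_inj; rewrite -(prednK (lv_gt0 a)) eq_lv prednK.
Qed.

Lemma copies_lv_range x : 0 < copies_lv lv x <= #|vert (copies m G)|.
Proof.
case: x => k a; rewrite card_copies /copies_lv /= addnS.
have lt_a : (lv a).-1 < #|vert G| by have := lv_range a; lia.
exact: mulnD_ltn.
Qed.

Lemma copies_le_inj : {in edges (copies m G) &, injective (copies_le le)}.
Proof.
rewrite edges_copies => _ _ /imsetP[[k A] + ->] /imsetP[[l A'] + ->].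
rewrite !in_setX /= !in_setT => EA EA'.
rewrite !copies_le_pair ?edge_neq0 // -!(subnSK (ltn_ord _)) !addnS.
move=> /succn_inj /(mulnD_ltn_inj (lt_copy k) (lt_copy l)) [eq_le eq_kl].
have -> : A = A' by apply: le_inj; rewrite // -(prednK (le_gt0 EA)) eq_le prednK ?le_gt0.
by have -> : k = l by apply: ord_inj; have := ltn_ord k; have := ltn_ord l; lia.
Qed.

Lemma copies_le_range :
  {in edges (copies m G), forall B,
    #|vert (copies m G)| < copies_le le B <= #|vert (copies m G)| + #|edges (copies m G)|}.
Proof.
rewrite card_copies card_edges_copies -mulnDr edges_copies => _ /imsetP[[k A] + ->].
rewrite in_setX /= in_setT => EA.
rewrite copies_le_pair ?edge_neq0 // -(subnSK (ltn_ord k)) addnS ltnS.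
have /andP[le_VA lt_AE] : #|vert G| <= (le A).-1 < #|vert G| + #|edges G|.
  by have := le_range EA; lia.
rewrite (mulnD_ltn lt_AE (lt_copy k)) andbT (leq_trans _ (leq_addr _ _)) //.
by rewrite leq_mul2l le_VA orbT.
Qed.
End CopiesLabeling.

Theorem copies_C3_supermagic : H_supermagic C3 G -> H_supermagic C3 (copies m G).
Proof.
case=> cover [lv [le /supermagic_labelingP[lv_inj lv_range le_inj le_range [c magic]]]].
split; first exact: copies_covering.
exists (copies_lv lv), (copies_le le); apply/supermagic_labelingP; split.
- exact: copies_lv_inj.
- exact: copies_lv_range.
- exact: copies_le_inj.
- exact: copies_le_range.
have lv_gt0 v : 0 < lv v by case/andP: (lv_range v).
have le_gt0 : {in edges G, forall A, 0 < le A} by move=> A /le_range; lia.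
exists (m * c + 3 - 3 * m) => f /embedding_C3_copies[k [g [g_emb f_eq]]].
have /embedding_C3[a01 a12 a02] := g_emb.
rewrite weight_C3 !f_eq; have := triangle_weight_copies k lv_gt0 le_gt0 a01 a12 a02.
by rewrite -weight_C3 magic //; lia.
Qed.
End Copies.

(* The paper's labelling of W_(2h), with v_(i+1) written i: the centre gets 1, v_(i+1) gets
   rim_rank + 1, the spoke c v_(i+1) gets 2h + 2 + spoke_rank and the rim edge
   v_(i+1) v_(i+2) gets 2h + 2 + rim_edge_rank. *)
Definition rim_rank (h i : nat) : nat :=
  if i + 2 <= h then h.*2 - i.*2 else if i.+1 == h then 3 else if i == h then 2
  else if i == h.+1 then 1 else i.*2.+1 - h.*2.

Definition spoke_rank (h i : nat) : nat :=
  if i + 2 <= h then 4 * i + 2 else if i.+1 == h then 4 * h - 3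
  else if i == h then 4 * h - 1 else if i == h.+1 then 4 * h - 2 else 8 * h - 4 * i.

Definition rim_edge_rank (h i : nat) : nat :=
  if i.+1 == h.*2 then 4 * h - 4 else if i + 2 <= h then 4 * h - 5 - 4 * i
  else if i.+1 == h then 0 else if i == h then 1 else if i == h.+1 then 5 else 4 * i + 1 - 4 * h.

Section WheelRanks.
Variable h : nat.
Hypothesis h_gt1 : 1 < h.

Lemma rim_rank_range i : i < h.*2 -> 0 < rim_rank h i <= h.*2.
Proof. by rewrite /rim_rank; repeat case: ifP; lia. Qed.

Lemma rim_rank_inj i j : i < h.*2 -> j < h.*2 -> rim_rank h i = rim_rank h j -> i = j.
Proof. by rewrite /rim_rank; repeat case: ifP; lia. Qed.

Lemma spoke_rank_lt i : i < h.*2 -> spoke_rank h i < 4 * h.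
Proof. by rewrite /spoke_rank; repeat case: ifP; lia. Qed.

Lemma rim_edge_rank_lt i : i < h.*2 -> rim_edge_rank h i < 4 * h.
Proof. by rewrite /rim_edge_rank; repeat case: ifP; lia. Qed.

Lemma spoke_rank_inj i j : i < h.*2 -> j < h.*2 -> spoke_rank h i = spoke_rank h j -> i = j.
Proof. by rewrite /spoke_rank; repeat case: ifP; lia. Qed.

Lemma rim_edge_rank_inj i j :
  i < h.*2 -> j < h.*2 -> rim_edge_rank h i = rim_edge_rank h j -> i = j.
Proof. by rewrite /rim_edge_rank; repeat case: ifP; lia. Qed.

Lemma spoke_rim_edge_rank_neq i j :
  i < h.*2 -> j < h.*2 -> spoke_rank h i != rim_edge_rank h j.
Proof. by rewrite /spoke_rank /rim_edge_rank; repeat case: ifP; lia. Qed.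

Lemma rank_sum_triangle i : i < h.*2 ->
  rim_rank h i + rim_rank h (i.+1 %% h.*2) + spoke_rank h i + spoke_rank h (i.+1 %% h.*2) +
  rim_edge_rank h i = 8 * h + 1.
Proof.
move=> lt_i; case: (ltngtP i.+1 h.*2) => [lt_si | gt_si | eq_si].
- by rewrite modn_small // /rim_rank /spoke_rank /rim_edge_rank; repeat case: ifP; lia.
- by move: gt_si; rewrite ltnNge lt_i.
- by rewrite eq_si modnn /rim_rank /spoke_rank /rim_edge_rank; repeat case: ifP; lia.
Qed.
End WheelRanks.

Section Wheel.
Variable n : nat.

Lemma val_ordS (i : 'I_n) : (ordS i : nat) = if i.+1 == n then 0 else i.+1.
Proof.
rewrite /=; case: eqP => [-> | /eqP ne_in]; first exact: modnn.
by rewrite modn_small // ltn_neqAle ne_in ltn_ord.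
Qed.

Lemma eq_ordS (i j : 'I_n) : (j == ordS i) = (nat_of_ord j == if i.+1 == n then 0 else i.+1).
Proof. by rewrite -val_ordS. Qed.

Hypothesis n_gt2 : 2 < n.

Lemma ordS_neq (i : 'I_n) : ordS i != i.
Proof.
apply/eqP => /(congr1 (@nat_of_ord n)); rewrite val_ordS; have := ltn_ord i.
by case: ifP; lia.
Qed.

Lemma adj_wheel (a b : option 'I_n) :
  @adj (wheel n) a b =
  match a, b with
  | Some i, Some j => (j == ordS i) || (i == ordS j)
  | None, None => false
  | _, _ => true
  end.
Proof.
rewrite /= /symrel; case: a b => [i|] [j|] //=; rewrite -!val_eqE /=.
apply/andb_idl; apply: contraTneq => -[->].
by rewrite orbb eq_sym; exact: ordS_neq.
Qed.

Lemma ordSS_neq (i : 'I_n) : ordS (ordS i) != i.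
Proof.
apply/eqP => /(congr1 (@nat_of_ord n)); rewrite !val_ordS; have := ltn_ord i.
by repeat case: ifP; lia.
Qed.

Definition wheel_edge (e : bool * 'I_n) : {set option 'I_n} :=
  if e.1 then [set Some e.2; Some (ordS e.2)] else [set None; Some e.2].

Lemma wheel_edge_inj : injective wheel_edge.
Proof.
move=> [[] i] [[] j] /setP eq_e.
- have := eq_e (Some i); rewrite !inE !eqxx /= => /esym /orP[/eqP[-> //] | /eqP[eq_i]].
  have := eq_e (Some j); rewrite !inE !eqxx /= eq_i !(inj_eq Some_inj).
  by rewrite ![j == _]eq_sym (negbTE (ordS_neq j)) (negbTE (ordSS_neq j)).
- by have := eq_e None; rewrite !inE.
- by have := eq_e None; rewrite !inE.
- by have := eq_e (Some i); rewrite !inE !eqxx /= => /esym /eqP[->].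
Qed.

Lemma edges_wheel : edges (wheel n) = [set wheel_edge e | e : bool * 'I_n].
Proof.
apply/setP => A; rewrite inE; apply/existsP/imsetP => [[a /existsP[b]] | [[[] i] _ ->]].
- rewrite adj_wheel; case: a b => [i|] [j|] //.
  + case/andP=> /orP[] /eqP -> /eqP ->; first by exists (true, i).
    by exists (true, j); rewrite //= setUC.
  + by case/andP=> _ /eqP ->; exists (false, i); rewrite //= setUC.
  + by case/andP=> _ /eqP ->; exists (false, j).
- by exists (Some i); apply/existsP; exists (Some (ordS i)); rewrite adj_wheel !eqxx.
- by exists None; apply/existsP; exists (Some i); rewrite adj_wheel eqxx.
Qed.

Lemma card_edges_wheel : #|edges (wheel n)| = n.*2.
Proof.
by rewrite edges_wheel card_imset ?card_prod ?card_bool ?card_ord ?mul2n //; apply: wheel_edge_inj.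
Qed.

Lemma wheel_triangle_cover (x y : option 'I_n) :
  @adj (wheel n) x y -> exists z, @adj (wheel n) x z && @adj (wheel n) y z.
Proof.
rewrite adj_wheel; case: x y => [i|] [j|] // _.
- by exists None; rewrite !adj_wheel.
- by exists (Some (ordS i)); rewrite !adj_wheel !eqxx.
- by exists (Some (ordS j)); rewrite !adj_wheel !eqxx.
Qed.

Lemma no_rim_triangle (i j l : 'I_n) : 3 < n ->
  @adj (wheel n) (Some i) (Some j) -> @adj (wheel n) (Some j) (Some l) ->
  ~~ @adj (wheel n) (Some i) (Some l).
Proof.
move=> n_gt3; rewrite !adj_wheel !eq_ordS.
by have := ltn_ord i; have := ltn_ord j; have := ltn_ord l; repeat case: ifP; lia.
Qed.

Lemma wheel_triangle (lv : option 'I_n -> nat) (le : {set option 'I_n} -> nat)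
    (x y z : option 'I_n) : 3 < n ->
  @adj (wheel n) x y -> @adj (wheel n) y z -> @adj (wheel n) x z ->
  exists i, @triangle_weight (wheel n) lv le x y z =
            @triangle_weight (wheel n) lv le None (Some i) (Some (ordS i)).
Proof.
move=> n_gt3.
have from_centre j l : @adj (wheel n) (Some j) (Some l) ->
    exists i, @triangle_weight (wheel n) lv le None (Some j) (Some l) =
              @triangle_weight (wheel n) lv le None (Some i) (Some (ordS i)).
  by rewrite adj_wheel => /orP[] /eqP ->; [exists j | exists l; rewrite triangle_weightC23].
case: x y z => [i|] [j|] [l|] // a_xy a_yz a_xz.
- by have := no_rim_triangle n_gt3 a_xy a_yz; rewrite a_xz.
- by rewrite triangle_weightC23 triangle_weightC12; apply: from_centre.
- by rewrite triangle_weightC12; apply: from_centre.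
- exact: from_centre.
Qed.
End Wheel.

Section WheelLabeling.
Variable h : nat.
Hypothesis h_gt1 : 1 < h.

Definition wheel_lv (x : option 'I_h.*2) : nat :=
  if x is Some i then (rim_rank h i).+1 else 1.

Definition wheel_edge_rank (e : bool * 'I_h.*2) : nat :=
  if e.1 then rim_edge_rank h e.2 else spoke_rank h e.2.

Definition wheel_le (A : {set option 'I_h.*2}) : nat :=
  if [pick e | wheel_edge e == A] is Some e then h.*2.+2 + wheel_edge_rank e else 0.

Let h2_gt3 : 3 < h.*2. Proof. by rewrite -mul2n; lia. Qed.
Let h2_gt2 : 2 < h.*2. Proof. exact: ltnW. Qed.

Lemma wheel_le_edge e : wheel_le (wheel_edge e) = h.*2.+2 + wheel_edge_rank e.
Proof.
rewrite /wheel_le; case: pickP => [e' /eqP /(wheel_edge_inj h2_gt2) -> // | /(_ e)].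
by rewrite eqxx.
Qed.

Lemma wheel_edge_rank_inj : injective wheel_edge_rank.
Proof.
move=> [[] i] [[] j]; rewrite /wheel_edge_rank /= => eq_r.
- by rewrite (ord_inj (rim_edge_rank_inj h_gt1 (ltn_ord i) (ltn_ord j) eq_r)).
- by have := spoke_rim_edge_rank_neq h_gt1 (ltn_ord j) (ltn_ord i); rewrite eq_r eqxx.
- by have := spoke_rim_edge_rank_neq h_gt1 (ltn_ord i) (ltn_ord j); rewrite eq_r eqxx.
- by rewrite (ord_inj (spoke_rank_inj h_gt1 (ltn_ord i) (ltn_ord j) eq_r)).
Qed.

Lemma wheel_edge_rank_lt e : wheel_edge_rank e < 4 * h.
Proof. by case: e => [[] i]; [apply: rim_edge_rank_lt | apply: spoke_rank_lt]. Qed.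

Lemma wheel_triangle_weight (i : 'I_h.*2) :
  @triangle_weight (wheel h.*2) wheel_lv wheel_le None (Some i) (Some (ordS i)) = 14 * h + 10.
Proof.
rewrite /triangle_weight -[[set None; Some i]]/(wheel_edge (false, i)).
rewrite -[[set Some i; Some (ordS i)]]/(wheel_edge (true, i)).
rewrite -[[set None; Some (ordS i)]]/(wheel_edge (false, ordS i)) !wheel_le_edge /wheel_edge_rank /=.
change (nat_of_ord (ordS i)) with (i.+1 %% h.*2).
by have := rank_sum_triangle h_gt1 (ltn_ord i); lia.
Qed.

Theorem wheel_C3_supermagic : H_supermagic C3 (wheel h.*2).
Proof.
split; first by apply: C3_covering => x y; exact: wheel_triangle_cover.
exists wheel_lv, wheel_le; apply/supermagic_labelingP; split.
- move=> [i|] [j|] //= [].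
  + by move/(rim_rank_inj h_gt1 (ltn_ord i) (ltn_ord j))/ord_inj ->.
  + by have := rim_rank_range h_gt1 (ltn_ord i); lia.
  + by have := rim_rank_range h_gt1 (ltn_ord j); lia.
- move=> [i|] //=; rewrite card_option card_ord //.
  by have := rim_rank_range h_gt1 (ltn_ord i); lia.
- rewrite (edges_wheel h2_gt2) => _ _ /imsetP[e _ ->] /imsetP[e' _ ->].
  by rewrite !wheel_le_edge => /addnI /wheel_edge_rank_inj ->.
- rewrite card_option card_ord (card_edges_wheel h2_gt2) (edges_wheel h2_gt2) => _ /imsetP[e _ ->].
  by rewrite wheel_le_edge; have := wheel_edge_rank_lt e; rewrite -mul2n; lia.
exists (14 * h + 10) => f /embedding_C3[a01 a12 a02]; rewrite weight_C3.
have [i ->] := wheel_triangle h2_gt2 wheel_lv wheel_le h2_gt3 a01 a12 a02.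
exact: wheel_triangle_weight.
Qed.
End WheelLabeling.

Theorem theorem6 (n m : nat) :
  ~~ odd n -> 4 <= n -> 2 <= m ->
  H_supermagic (cycle_graph 3) (copies m (wheel n)).
Proof.
move=> n_even n_ge4 _; apply: copies_C3_supermagic.
have n_double : n = n./2.*2 by rewrite -[n in LHS]odd_double_half (negbTE n_even).
by rewrite n_double; apply: wheel_C3_supermagic; move: n_ge4; rewrite n_double -mul2n; lia.
Qed.
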